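(* Let $n \ge 2$ be an integer, let $1 \le \underline{x}_i < \bar{x}_i$ for $i \in \{1,2\}$, and let $\varepsilon \ge 2^{-2^{n-1}}$. Then for every $(x_1,x_2) \in [\underline{x}_1,\bar{x}_1] \times [\underline{x}_2,\bar{x}_2]$ there exists an $\varepsilon$-feasible point $y \in \mathbb{R}^{n+2}$ with $y_n = 0$ for the lower-level problem $$\max_{y \in \mathbb{R}^{n+2}} \; y_1 - y_n\,(x_1 + x_2 - y_{n+1} - y_{n+2})$$ subject to $y_1 + y_n = \tfrac12$, $y_i^2 \le y_{i+1}$ for $i \in \{1,\dots,n-1\}$, $y_i \ge 0$ for $i \in \{1,\dots,n\}$, $y_{n+1} \in [0,x_1]$, $y_{n+2} \in [-x_2,x_2]$.
   Context: For $\varepsilon>0$, a point is called $\varepsilon$-feasible for an optimization problem with constraints $g(y) \le 0$, $h(y)=0$ if all linear constraints are satisfied exactly and every nonlinear inequality constraint $g_i$ satisfies $g_i(y) \le \varepsilon$ and every nonlinear equality constraint $h_j$ satisfies $|h_j(y)| \le \varepsilon$. In the lower-level problem here, the only nonlinear constraints are $y_i^2 - y_{i+1} \le 0$, $i \in \{1,\dots,n-1\}$; all other constraints must hold exactly. *)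

From HB Require Import structures.
From mathcomp Require Import all_boot all_order all_algebra.
Set Implicit Arguments. Unset Strict Implicit. Unset Printing Implicit Defensive.
Import Order.TTheory GRing.Theory Num.Theory.
Local Open Scope ring_scope.

(* 1-based coordinate access of a vector y in R^(n+2): ycoord y i = y_i for 1 <= i <= n+2. *)
Definition ycoord (R : pzRingType) (n : nat) (y : 'rV[R]_(n.+2)) (i : nat) : R :=
  y ord0 (inord i.-1).

(* eps-feasibility for the lower-level problem:
   linear constraints exactly, nonlinear constraints y_i^2 - y_{i+1} <= 0 relaxed to <= eps. *)
Definition eps_feasible_LL (R : realFieldType) (n : nat) (x1 x2 eps : R)
    (y : 'rV[R]_(n.+2)) : Prop :=
  [/\ ycoord y 1 + ycoord y n = 2^-1,
      (forall i : nat, (1 <= i <= n.-1)%N -> ycoord y i ^+ 2 - ycoord y i.+1 <= eps),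
      (forall i : nat, (1 <= i <= n)%N -> 0 <= ycoord y i),
      0 <= ycoord y n.+1 <= x1 &
      - x2 <= ycoord y n.+2 <= x2].

From HB Require Import structures.
From mathcomp Require Import all_boot all_order all_algebra.
From mathcomp Require Import zify.
Import Order.TTheory GRing.Theory Num.Theory.
Local Open Scope ring_scope.

(* Take y_i = (1/2)^(2^(i-1)) for i < n and all other coordinates 0.  Then
   y_1 + y_n = 1/2, and y_i^2 = y_(i+1) holds exactly along the chain except at
   its end i = n-1, where y_(n-1)^2 - y_n = (1/2)^(2^(n-1)) <= eps is the only
   violated nonlinear constraint. *)

Definition sq_chain {R : pzRingType} (a : R) (k m : nat) : 'rV[R]_m :=
  \row_(j < m) if (j < k)%N then a ^+ (2 ^ j) else 0.

Section SquaringChain.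

Variables (R : pzRingType) (a : R) (k n : nat).

Lemma ycoord_sq_chain i : (1 <= i <= n.+2)%N ->
  ycoord (sq_chain a k n.+2) i = if (i <= k)%N then a ^+ (2 ^ i.-1) else 0.
Proof.
move=> i_range; rewrite /ycoord /sq_chain mxE inordK; last by lia.
by case: i i_range.
Qed.

Lemma sq_chain_gap i : (1 <= i <= k)%N -> (k < n.+2)%N ->
  ycoord (sq_chain a k n.+2) i ^+ 2 - ycoord (sq_chain a k n.+2) i.+1
  = if (i < k)%N then 0 else a ^+ (2 ^ k).
Proof.
move=> /andP[i_gt0 i_le_k] k_lt; rewrite !ycoord_sq_chain; try lia.
rewrite i_le_k -exprM -expnSr prednK //.
by case: ltnP => [_ | k_le_i]; rewrite ?subrr // subr0 (@anti_leq i k) ?i_le_k.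
Qed.

End SquaringChain.

Lemma sq_chain_ge0 (R : numDomainType) (a : R) (k n i : nat) : 0 <= a ->
  (1 <= i <= n.+2)%N -> 0 <= ycoord (sq_chain a k n.+2) i.
Proof.
move=> a_ge0 i_range; rewrite ycoord_sq_chain //.
by case: ifP => // _; rewrite exprn_ge0.
Qed.

Theorem mainTheorem4 (R : realFieldType) (n : nat) (xl1 xu1 xl2 xu2 eps : R) :
  (2 <= n)%N ->
  1 <= xl1 -> xl1 < xu1 -> 1 <= xl2 -> xl2 < xu2 ->
  (2 : R) ^- (2 ^ n.-1)%N <= eps ->
  forall x1 x2 : R, xl1 <= x1 <= xu1 -> xl2 <= x2 <= xu2 ->
  exists y : 'rV[R]_(n.+2), eps_feasible_LL x1 x2 eps y /\ ycoord y n = 0.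
Proof.
move=> n_ge2 xl1_ge1 _ xl2_ge1 _ eps_ge x1 x2 /andP[x1_ge _] /andP[x2_ge _].
have x1_ge0 : 0 <= x1 by rewrite (le_trans _ (le_trans xl1_ge1 x1_ge)).
have x2_ge0 : 0 <= x2 by rewrite (le_trans _ (le_trans xl2_ge1 x2_ge)).
have eps_ge0 : 0 <= eps by rewrite (le_trans _ eps_ge) // invr_ge0 exprn_ge0.
have yn_eq0 : ycoord (sq_chain (2^-1 : R) n.-1 n.+2) n = 0.
  by rewrite ycoord_sq_chain ?ifF //; lia.
exists (sq_chain 2^-1 n.-1 n.+2); split=> //; split.
- by rewrite yn_eq0 ycoord_sq_chain ?ifT ?addr0 //; lia.
- move=> i i_range; rewrite sq_chain_gap //; last by lia.
  by case: ifP => // _; rewrite exprVn.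
- by move=> i i_range; apply: sq_chain_ge0; rewrite ?invr_ge0 //; lia.
- by rewrite ycoord_sq_chain ?ifF ?lexx //; lia.
- by rewrite ycoord_sq_chain ?ifF ?oppr_le0 ?x2_ge0 //; lia.
Qed.
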